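(* Let $q$ be a prime power and $k\ge 8$. Let $\mathbf F_q=\{f_1=0,f_2,\dots,f_{q-1},f_q=1\}$, let $U_i=\langle\mathbf e_1+f_i\mathbf e_2,\mathbf e_3+f_i\mathbf e_4\rangle$ and $U_{q+i}=\langle\mathbf e_5+f_i\mathbf e_6,\mathbf e_7+f_i\mathbf e_8\rangle$ for $1\le i\le q$ (with $\mathbf e_j$ the standard basis of $\mathbf F_q^k$), let $U$ be the set of nonzero vectors of $\mathbf F_q^k$ outside $U_1\cup\dots\cup U_{2q}$, and let $\mathbf C_2$ be the linear $[n,k,d]_q$ code, $n=\frac{(q^k-1)-2q(q^2-1)}{q-1}$, $d=q^{k-1}-2q^2$, whose generator matrix has as columns exactly one representative of each class $\{\lambda\mathbf v:\lambda\in\mathbf F_q^*\}$, $\mathbf v\in U$; it is a locally recoverable code with locality $2$. If $q=2$, the CM defect of $\mathbf C_2$ is at most $2$; if $q\ge3$, the CM defect of $\mathbf C_2$ is at most $1$.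
   Context: $k^{(q)}_{\mathrm{opt}}(n,d)$ denotes the maximum dimension of a linear code over $\mathbf F_q$ of length $n$ and minimum distance $d$. For a locally recoverable linear $[n,k,d]_q$ code with locality $r$ (each coordinate's value is determined, on the code, by the values on some set of at most $r$ other coordinates), the Cadambe–Mazumdar bound states $k\le\min_{t\in\mathbb Z_{>0}}\{tr+k^{(q)}_{\mathrm{opt}}(n-t(r+1),d)\}$, and the CM defect is $\min_{t\in\mathbb Z_{>0}}\{tr+k^{(q)}_{\mathrm{opt}}(n-t(r+1),d)\}-k$; here $r=2$. *)

From HB Require Import structures.
From mathcomp Require Import all_boot all_order all_algebra all_field.
Set Implicit Arguments. Unset Strict Implicit. Unset Printing Implicit Defensive.
Import GRing.Theory.
Local Open Scope ring_scope.

(* Codes are subspaces of 'rV[F]_n, represented (mxalgebra style) by the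
   row space of a matrix. *)

Definition wt (F : fieldType) (n : nat) (v : 'rV[F]_n) : nat :=
  #|[set i : 'I_n | v 0 i != 0]|.

(* k_opt^{(q)}(n,d): maximal dimension of a linear code C <= F^n all of
   whose nonzero codewords have weight >= d (the zero code counts, dim 0). *)
Definition kopt (F : finFieldType) (n d : nat) : nat :=
  \max_(C : 'M[F]_n | [forall v : 'rV[F]_n,
          ((v <= C)%MS && (v != 0)) ==> (d <= wt v)%N]) \rank C.

(* Cadambe--Mazumdar bound  min_{t >= 1} { t r + k_opt(n - t(r+1), d) },
   t ranging over the t >= 1 with t(r+1) <= n (meaningful lengths). *)
Definition cm_term (F : finFieldType) (n d r t : nat) : nat :=
  (t * r + kopt F (n - t * r.+1) d)%N.

Definition cm_bound (F : finFieldType) (n d r : nat) : nat :=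
  \big[minn/cm_term F n d r 1]_(1 <= t < (n %/ r.+1).+1) cm_term F n d r t.

Definition cm_defect (F : finFieldType) (n k d r : nat) : nat :=
  (cm_bound F n d r - k)%N.

(* Minimum distance of the code generated by G (default n if the code is 0) *)
Definition code_mindist (F : finFieldType) (k n : nat) (G : 'M[F]_(k, n)) : nat :=
  \big[minn/n]_(m : 'rV[F]_k | m *m G != 0) wt (m *m G).

(* standard basis vector e_{j+1} (0-based index j) of F^k, as a column *)
Definition ebasis (F : fieldType) (k j : nat) : 'cV[F]_k :=
  \col_(i < k) (((i : nat) == j)%:R : F).

Definition in_U1 (F : fieldType) (k : nat) (f : F) (v : 'cV[F]_k) : Prop :=
  exists a b : F, v = a *: (ebasis F k 0 + f *: ebasis F k 1)
                    + b *: (ebasis F k 2 + f *: ebasis F k 3).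

Definition in_U2 (F : fieldType) (k : nat) (f : F) (v : 'cV[F]_k) : Prop :=
  exists a b : F, v = a *: (ebasis F k 4 + f *: ebasis F k 5)
                    + b *: (ebasis F k 6 + f *: ebasis F k 7).

Definition in_U (F : fieldType) (k : nat) (v : 'cV[F]_k) : Prop :=
  v != 0 /\ (forall f : F, ~ in_U1 f v) /\ (forall f : F, ~ in_U2 f v).

Definition C2_generator (F : fieldType) (k n : nat) (G : 'M[F]_(k, n)) : Prop :=
  (forall j : 'I_n, in_U (col j G)) /\
  (forall (j j' : 'I_n) (c : F), col j G = c *: col j' G -> j = j') /\
  (forall v : 'cV[F]_k, in_U v -> exists (j : 'I_n) (c : F), v = c *: col j G).

From HB Require Import structures.
From mathcomp Require Import all_boot all_order all_algebra all_field.
From mathcomp Require Import mxabelem zify ring.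
Set Implicit Arguments. Unset Strict Implicit. Unset Printing Implicit Defensive.
Import Order.TTheory GRing.Theory.
Local Open Scope ring_scope.

(* Up to scalars, the columns of G are the points of F^k outside the 2q
   planes U_i, which pairwise meet only in 0; hence (q - 1) n = q^k - 1 -
   2q(q^2 - 1).  For m <> 0 the weight of mG counts the projective points
   of U off the hyperplane m^perp; each plane has at most q^2 - q vectors
   off it, so wt(mG) >= q^(k-1) - 2q^2 =: d > 0, and G has rank k.  The
   Plotkin bound then shows that a code of length n - 3 (resp. n - 6 when
   q = 2) and distance d has dimension < k (resp. < k - 1), so t = 1
   (resp. t = 2) in the Cadambe-Mazumdar bound gives k + 1 (resp. k + 2). *)

Section LinearCodes.
Variable F : finFieldType.
Local Notation q := #|F|.

Lemma card_mulmx_eq0 l k (A : 'M[F]_(l, k)) :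
  #|[set v : 'cV[F]_k | A *m v == 0]| = (q ^ (k - \rank A))%N.
Proof.
rewrite -mxrank_tr -mxrank_ker -card_rowg -(card_imset _ (@trmx_inj _ _ _)).
apply: eq_card => u; rewrite mem_rowg sub_kermx; apply/imsetP/idP => [[v]|uA0].
  by rewrite inE -trmx_eq0 trmx_mul => vA0 ->.
by exists u^T; rewrite ?trmxK // inE -trmx_eq0 trmx_mul trmxK.
Qed.

Lemma card_mulmx_neq0 l k (A : 'M[F]_(l, k)) :
  #|[set v : 'cV[F]_k | A *m v != 0]| = (q ^ k - q ^ (k - \rank A))%N.
Proof.
have -> : (q ^ k = #|{: 'cV[F]_k}|)%N by rewrite card_mx muln1.
rewrite -card_mulmx_eq0 -(cardsC [set v | A *m v == 0]) addKn.
by apply: eq_card => v; rewrite !inE.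
Qed.

Lemma card_rowg_coord_neq0 m N (C : 'M[F]_(m, N)) (i : 'I_N) :
  (q * #|[set v in rowg C | v 0%R i != 0%R]| <= (q - 1) * #|rowg C|)%N.
Proof.
set S1 := [set v in rowg C | v 0%R i != 0%R]; set S0 := [set v : 'rV_N in rowg C | v 0 i == 0].
have cardS : (#|S1| + #|S0| = #|rowg C|)%N.
  rewrite -(cardsID [set v : 'rV_N | v 0 i != 0] (rowg C)).
  by congr addn; apply: eq_card => v; rewrite !inE ?negbK andbC.
have [->|[w /setIdP[wC wi]]] := set_0Vmem S1; first by rewrite cards0 muln0.
pose proj (v : 'rV[F]_N) := (v 0 i, v - (v 0 i / w 0 i) *: w).
have proj_inj : {in rowg C &, injective proj}.
  by move=> v1 v2 _ _ [e1]; rewrite e1 => /addIr.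
have proj_sub : proj @: rowg C \subset setX [set: F] S0.
  apply/subsetP => _ /imsetP[v vC ->].
  rewrite !inE /= !mxE mulfVK // subrr eqxx andbT -scaleNr addmx_sub -?mem_rowg //.
  by rewrite mem_rowg scalemx_sub -?mem_rowg.
have := subset_leq_card proj_sub; rewrite cardsX cardsT card_in_imset //.
move: cardS (card_finNzRing_gt1 F); move: #|F| #|S0| #|S1| #|rowg C| => Q a b c; nia.
Qed.

Lemma sum_wt_rowg m N (C : 'M[F]_(m, N)) :
  (\sum_(v in rowg C) wt v = \sum_i #|[set v in rowg C | v 0%R i != 0%R]|)%N.
Proof.
under eq_bigr do rewrite /wt -sum1dep_card big_mkcond /=.
rewrite exchange_big; apply: eq_bigr => i _.
by rewrite -sum1dep_card big_mkcondr.
Qed.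

Lemma plotkin_bound N m (C : 'M[F]_(m, N)) d :
  (forall v : 'rV_N, (v <= C)%MS -> v != 0 -> (d <= wt v)%N) ->
  (q * ((q ^ \rank C - 1) * d) <= N * ((q - 1) * q ^ \rank C))%N.
Proof.
move=> wtC; rewrite -card_rowg.
have C0 : 0 \in rowg C by rewrite mem_rowg sub0mx.
have upper : (q * \sum_(v in rowg C) wt v <= N * ((q - 1) * #|rowg C|))%N.
  rewrite sum_wt_rowg big_distrr /=.
  apply: (@leq_trans (\sum_(i < N) (q - 1) * #|rowg C|)%N).
    by apply: leq_sum => i _; apply: card_rowg_coord_neq0.
  by rewrite sum_nat_const card_ord.
have lower : ((#|rowg C| - 1) * d <= \sum_(v in rowg C) wt v)%N.
  rewrite (big_setD1 0 C0) /= (cardsD1 0 (rowg C)) C0 add1n subn1 -sum_nat_const.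
  apply: leq_trans (leq_addl _ _); apply: leq_sum => v; rewrite !inE => /andP[v0 vC].
  exact: wtC.
by apply: leq_trans upper; rewrite leq_mul2l lower orbT.
Qed.

Lemma kopt_lt N d K : (N * ((q - 1) * q ^ K) < q * ((q ^ K - 1) * d))%N ->
  (kopt F N d < K)%N.
Proof.
move=> gap; have K_gt0 : (0 < K)%N by case: K gap; rewrite // subnn !muln0.
apply: (big_ind (fun r => r < K)%N) => // [r1 r2|C /forallP admC].
  by rewrite gtn_max => ->.
rewrite ltnNge; apply/negP => leKC.
have wtC v : (v <= C)%MS -> v != 0 -> (d <= wt v)%N.
  by move=> vC v0; move/implyP: (admC v); apply; rewrite vC.
have q_gt0 : (0 < q)%N := ltnW (card_finNzRing_gt1 F).
have qK_le : (q ^ K <= q ^ \rank C)%N by apply: leq_pexp2l.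
have qK_gt0 : (0 < q ^ K)%N by rewrite expn_gt0 q_gt0.
move: (plotkin_bound wtC) gap qK_le qK_gt0.
move: (q ^ K)%N (q ^ \rank C)%N (q - 1)%N => a b p plotkin gap ab a_gt0.
(* (a - 1) / a <= (b - 1) / b, so the Plotkin bound for b contradicts [gap]. *)
have b_gt0 : (0 < b)%N := leq_trans a_gt0 ab.
have : (N * (p * a) * b < q * ((a - 1) * d) * b)%N by rewrite ltn_pmul2r.
have : (q * ((b - 1) * d) * a <= N * (p * b) * a)%N by rewrite leq_mul2r plotkin orbT.
have : ((a - 1) * b <= (b - 1) * a)%N by nia.
nia.
Qed.

Lemma cm_bound_le N d r t : (0 < t)%N -> (t * r.+1 <= N)%N ->
  (cm_bound F N d r <= t * r + kopt F (N - t * r.+1) d)%N.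
Proof.
move=> t_gt0 tN; apply: (@ge_bigmin_seq _ nat _ _ _ t xpredT (cm_term F N d r)) => //.
by rewrite mem_index_iota t_gt0 ltnS leq_divRL.
Qed.

Lemma wt0 N : wt (0 : 'rV[F]_N) = 0%N.
Proof. by apply/eqP; rewrite cards_eq0; apply/eqP/setP => i; rewrite !inE mxE eqxx. Qed.

Lemma wt_le N (v : 'rV[F]_N) : (wt v <= N)%N.
Proof. by rewrite /wt (leq_trans (max_card _)) ?card_ord. Qed.

Lemma leq_code_mindist k n (G : 'M[F]_(k, n)) d : (d <= n)%N ->
  (forall m, m *m G != 0 -> (d <= wt (m *m G))%N) -> (d <= code_mindist G)%N.
Proof. by move=> dn wtG; apply: (big_ind (leq d)) => // x y; rewrite leq_min => ->. Qed.

Lemma row_free_mul_neq0 k n (G : 'M[F]_(k, n)) :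
  (forall m : 'rV_k, m != 0 -> m *m G != 0) -> row_free G.
Proof.
move=> mG; rewrite -kermx_eq0 -submx0; apply/row_subP => i.
by rewrite submx0; apply/negPn/negP => /mG; rewrite -row_mul mulmx_ker row0 eqxx.
Qed.

End LinearCodes.

(* With D = X - 2q^2 the two sides differ by q((q - 3)X + 2q^2). *)
Lemma plotkin_gap_q_ge3 q X n D : (3 <= q)%N -> (2 * q ^ 2 < X)%N ->
  ((q - 1) * n + (1 + 2 * q * (q ^ 2 - 1)) = q * X)%N -> (X - 2 * q ^ 2 <= D)%N ->
  ((n - 1 * 3) * ((q - 1) * (q * X)) < q * ((q * X - 1) * D))%N.
Proof.
move=> q3 X_gt len dist.
set E := (X - 2 * q ^ 2)%N in dist *.
have XE : X = (E + 2 * q ^ 2)%N by rewrite subnK // ltnW.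
have qE : (q <= q * E)%N by rewrite leq_pmulr // subn_gt0.
clearbody E.
have lenE : ((q - 1) * n + 1 = q * E + 2 * q)%N.
  move: len; rewrite XE !expnS expn0 muln1; nia.
set M := ((n - 3) * (q - 1))%N.
have M_le : (M + q <= q * E + 2)%N.
  by rewrite /M mulnBl [(n * _)%N]mulnC; move: ((q - 1) * n)%N (q * E)%N lenE qE => a b; lia.
have E_lt : (E < X)%N by rewrite XE -addn1 leq_add2l muln_gt0 expn_gt0; lia.
have key : (M * X < (q * X - 1) * E)%N.
  have h1 : (M * X + q * X <= q * E * X + 2 * X)%N by rewrite -!mulnDl leq_mul2r M_le orbT.
  have h2 : (3 * X <= q * X)%N by rewrite leq_mul2r q3 orbT.
  rewrite mulnBl mul1n -mulnA [(X * E)%N]mulnC mulnA.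
  move: (M * X)%N (q * X)%N (q * E * X)%N h1 h2 => a b c; lia.
have -> : ((n - 1 * 3) * ((q - 1) * (q * X)) = q * (M * X))%N by rewrite /M mul1n; ring.
rewrite ltn_pmul2l ?(leq_trans _ q3) //; apply: leq_trans key _.
by rewrite leq_mul2l dist orbT.
Qed.

(* With D = X - 8 the two sides differ by X + 16. *)
Lemma plotkin_gap_q2 X n D : (8 < X)%N ->
  ((2 - 1) * n + (1 + 2 * 2 * (2 ^ 2 - 1)) = 2 * X)%N -> (X - 2 * 2 ^ 2 <= D)%N ->
  ((n - 2 * 3) * ((2 - 1) * X) < 2 * ((X - 1) * D))%N.
Proof.
move=> X_gt len dist; have -> : (n - 2 * 3 = 2 * X - 19)%N by lia.
apply: (@leq_trans (2 * ((X - 1) * (X - 2 * 2 ^ 2)))); first nia.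
by rewrite !leq_mul2l dist !orbT.
Qed.

Section CodeC2.
Variables (F : finFieldType) (k' : nat).
Local Notation q := #|F|.
Local Notation k := k'.+4.+4.

(* [Ugen (b, f) j] is e_(s+2j+1) + f e_(s+2j+2), with s = 0 for the planes
   U_1, ..., U_q and s = 4 for U_(q+1), ..., U_(2q) (ebasis is 0-based). *)
Definition Ugen (p : bool * F) (j : nat) : 'cV[F]_k :=
  let s := ((if p.1 then 0 else 4) + j.*2)%N in ebasis F k s + p.2 *: ebasis F k s.+1.

Definition Ubasis (p : bool * F) : 'M[F]_(k, 2) := \matrix_(i, j) Ugen p j i 0.

Definition Uplanes : {set 'cV[F]_k} := [set Ubasis p *m x | p : bool * F, x : 'cV[F]_2].

Definition Uset : {set 'cV[F]_k} := ~: Uplanes.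

Lemma cV2P (x y : 'cV[F]_2) : x 0 0 = y 0 0 -> x 1 0 = y 1 0 -> x = y.
Proof.
move=> x0 x1; apply/matrixP => i j; rewrite [j]ord1.
case: i => [[|[|//]]] i2.
  by rewrite (_ : Ordinal i2 = 0) //; apply: val_inj.
by rewrite (_ : Ordinal i2 = 1) //; apply: val_inj.
Qed.

Lemma mul_Ubasis p (x : 'cV[F]_2) : Ubasis p *m x = x 0 0 *: Ugen p 0 + x 1 0 *: Ugen p 1.
Proof.
apply/matrixP => i j; rewrite !mxE big_ord_recl big_ord1 !mxE /= [j]ord1 !(mulrC (x _ _)).
by congr (_ + _ * x _ _); apply: val_inj.
Qed.

Lemma Ubasis_coord p (x : 'cV[F]_2) i : (i < 8)%N ->
  (Ubasis p *m x) (inord i) 0 = nth 0 (nseq (if p.1 then 0 else 4)%N 0 ++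
    [:: x 0 0; x 0 0 * p.2; x 1 0; x 1 0 * p.2]) i.
Proof.
move=> i8; rewrite mul_Ubasis !mxE inordK ?(leq_trans i8) //.
by case: p => [[] f]; do 8?[case: i i8 => [|i] i8] => //=;
  rewrite !(mulr0, mulr1, addr0, add0r).
Qed.

Lemma Ubasis_inj p p' (x x' : 'cV[F]_2) :
  x != 0 -> Ubasis p *m x = Ubasis p' *m x' -> p = p' /\ x = x'.
Proof.
move=> x_neq0 E.
have x_nz : (x 0 0 != 0) || (x 1 0 != 0).
  apply: contraNT x_neq0; rewrite negb_or !negbK => /andP[/eqP x0 /eqP x1].
  by apply/eqP/cV2P; rewrite mxE.
(* Coordinates s and s + 2 recover x, coordinates s + 1 and s + 3 then f. *)
have coord i : (i < 8)%N -> (Ubasis p *m x) (inord i) 0 = (Ubasis p' *m x') (inord i) 0.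
  by rewrite E.
have := coord 0%N isT; have := coord 1%N isT; have := coord 2%N isT; have := coord 3%N isT.
have := coord 4%N isT; have := coord 5%N isT; have := coord 6%N isT; have := coord 7%N isT.
rewrite !Ubasis_coord //; clear coord E.
case: p p' => [[] f] [[] f'] /= e7 e6 e5 e4 e3 e2 e1 e0.
- rewrite -e0 -e2 in e1 e3; split; last exact: cV2P.
  by case/orP: x_nz => nz; [rewrite (mulfI nz e1) | rewrite (mulfI nz e3)].
- by move: x_nz; rewrite e0 e2 eqxx.
- by move: x_nz; rewrite e4 e6 eqxx.
- rewrite -e4 -e6 in e5 e7; split; last exact: cV2P.
  by case/orP: x_nz => nz; [rewrite (mulfI nz e5) | rewrite (mulfI nz e7)].
Qed.

Lemma Uplanes_mem p (x : 'cV[F]_2) : Ubasis p *m x \in Uplanes.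
Proof. exact: imset2_f. Qed.

Lemma in_UsetP v : reflect (in_U v) (v \in Uset).
Proof.
rewrite inE; apply: (iffP negP) => [notUv | [v_neq0 [notU1 notU2]]].
  split; [|split] => [|f [a [c vE]]|f [a [c vE]]].
  - by apply/eqP => v0; apply: notUv; rewrite v0 -(mulmx0 _ (Ubasis (true, 0))) Uplanes_mem.
  - apply: notUv; have := Uplanes_mem (true, f) (\col_i [:: a; c]`_i).
    by rewrite mul_Ubasis !mxE vE.
  - apply: notUv; have := Uplanes_mem (false, f) (\col_i [:: a; c]`_i).
    by rewrite mul_Ubasis !mxE vE.
case/imset2P => -[[] f] x _ _ vE; [apply: (notU1 f) | apply: (notU2 f)];
  by exists (x 0 0), (x 1 0); rewrite vE mul_Ubasis.
Qed.

Lemma Ubasis_mul_eq0 p (x : 'cV[F]_2) : (Ubasis p *m x == 0) = (x == 0).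
Proof.
apply/eqP/eqP => [|->]; last exact: mulmx0.
apply: contra_eq => x0; rewrite -(mulmx0 _ (Ubasis p)).
by apply/eqP => /(Ubasis_inj x0)[_ /eqP]; apply/negP.
Qed.

Lemma card_Uplanes : #|Uplanes| = (1 + 2 * q * (q ^ 2 - 1))%N.
Proof.
pose pts := [set Ubasis px.1 *m px.2 | px in setX [set: bool * F] [set~ (0 : 'cV[F]_2)]].
have -> : Uplanes = 0 |: pts.
  apply/setP => v; rewrite !inE; apply/imset2P/orP => [[p x _ _ ->]|].
    have [->|x0] := eqVneq x 0; first by rewrite mulmx0 eqxx; left.
    by right; apply/imsetP; exists (p, x); rewrite ?inE.
  by case=> [/eqP->|/imsetP[[p x] _ ->]]; [exists (true, 0) 0; rewrite ?mulmx0|exists p x].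
have card_pts : #|pts| = (2 * q * (q ^ 2 - 1))%N.
  rewrite card_in_imset => [|[p x] [p' x']]; last first.
    by rewrite !inE /= => x0 _ /(Ubasis_inj x0)[-> ->].
  by rewrite cardsX cardsT cardsC1 !card_prod card_bool card_mx muln1 subn1.
rewrite cardsU1 card_pts; case: imsetP => // -[[p x]].
by rewrite !inE /= => x0 /esym/eqP; rewrite Ubasis_mul_eq0 (negbTE x0).
Qed.

Lemma card_Uplanes_form_neq0 (m : 'rV[F]_k) :
  (#|[set v in Uplanes | m *m v != 0%R]| <= 2 * q * (q ^ 2 - q))%N.
Proof.
pose D := [set px : (bool * F) * 'cV[F]_2 | m *m (Ubasis px.1 *m px.2) != 0].
have sub : [set v in Uplanes | m *m v != 0] \subset [set Ubasis px.1 *m px.2 | px in D].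
  apply/subsetP => v; rewrite inE => /andP[/imset2P[p x _ _ ->] mv].
  by apply/imsetP; exists (p, x); rewrite ?inE.
apply: leq_trans (subset_leq_card sub) _; apply: leq_trans (leq_imset_card _ _) _.
have -> : #|D| = (\sum_(p : bool * F) #|[set x : 'cV[F]_2 | (m *m Ubasis p) *m x != 0%R]|)%N.
  rewrite -sum1dep_card; under [RHS]eq_bigr do rewrite -sum1dep_card.
  by rewrite pair_big_dep; apply: eq_bigl => -[p x]; rewrite /= mulmxA.
have plane_bound p : (#|[set x : 'cV[F]_2 | (m *m Ubasis p) *m x != 0%R]| <= q ^ 2 - q)%N.
  have q_gt0 : (0 < q)%N := ltnW (card_finNzRing_gt1 F).
  rewrite card_mulmx_neq0 leq_sub2l // -{1}(expn1 q) leq_pexp2l //.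
  by rewrite subn_gt0 (leq_ltn_trans (rank_leq_row _)).
apply: (@leq_trans (\sum_(p : bool * F) (q ^ 2 - q))%N); first exact: leq_sum.
by rewrite sum_nat_const card_prod card_bool.
Qed.

Lemma Uset_scale c v : c != 0 -> (c *: v \in Uset) = (v \in Uset).
Proof.
move=> c0; rewrite !inE; congr negb.
apply/imset2P/imset2P => -[p x _ _ vE]; last by exists p (c *: x); rewrite // vE scalemxAr.
by exists p (c^-1 *: x); rewrite // -scalemxAr -vE scalerA mulVf ?scale1r.
Qed.

Variables (n : nat) (G : 'M[F]_(k, n)).
Hypothesis HG : C2_generator G.

Lemma Uset_cols : Uset = [set jc.2 *: col jc.1 G | jc in setX [set: 'I_n] [set~ 0]].
Proof.
have [_ [_ UinG]] := HG; apply/setP => v; apply/idP/imsetP => [/in_UsetP vU|].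
  have [j [c vE]] := UinG v vU; exists (j, c) => //; rewrite !inE /=.
  by apply: contraNneq (proj1 vU) => c0; rewrite vE c0 scale0r.
case=> -[j c] /setXP[_]; rewrite in_setC1 /= => c0 ->; rewrite Uset_scale //.
by apply/(in_UsetP (col j G)); case: HG.
Qed.

Lemma card_Uset : #|Uset| = ((q - 1) * n)%N.
Proof.
have [colsU [colsP _]] := HG.
rewrite Uset_cols card_in_imset => [|[j c] [j' c']]; last first.
  rewrite !inE /= => c0 c0' E.
  have jj' : j = j' by apply: (colsP j j' (c^-1 * c')); rewrite -scalerA -E scalerA mulVf ?scale1r.
  have [colj0 _] := colsU j; subst j'; congr (_, _); apply/eqP; rewrite -subr_eq0.
  by move/eqP: E; rewrite -subr_eq0 -scalerBl scaler_eq0 (negbTE colj0) orbF.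
by rewrite cardsX cardsT cardsC1 card_ord mulnC subn1.
Qed.

Lemma C2_length : ((q - 1) * n + (1 + 2 * q * (q ^ 2 - 1)) = q ^ k)%N.
Proof. by rewrite -card_Uset -card_Uplanes addnC cardsC card_mx muln1. Qed.

Lemma card_Uset_form_neq0 (m : 'rV[F]_k) :
  (#|[set v in Uset | m *m v != 0%R]| <= (q - 1) * wt (m *m G))%N.
Proof.
pose supp := [set j | (m *m G) 0 j != 0].
have sub : [set v in Uset | m *m v != 0] \subset
    [set jc.2 *: col jc.1 G | jc in setX supp [set~ 0]].
  apply/subsetP => v; rewrite inE Uset_cols => /andP[/imsetP[[j c] jc ->] mv].
  apply/imsetP; exists (j, c) => //; move: jc mv; rewrite !inE /= => -> .
  rewrite -scalemxAr scaler_eq0 negb_or colE mulmxA -colE => /andP[_].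
  rewrite andbT; apply: contra => /eqP mGj; apply/eqP/matrixP => a b.
  by rewrite [a]ord1 [b]ord1 [LHS]mxE mGj mxE.
apply: leq_trans (subset_leq_card sub) _; apply: leq_trans (leq_imset_card _ _) _.
by rewrite cardsX cardsC1 mulnC subn1.
Qed.

Lemma C2_wt_lb (m : 'rV[F]_k) : m != 0 -> (q ^ k.-1 - 2 * q ^ 2 <= wt (m *m G))%N.
Proof.
move=> m0; have q_gt1 := card_finNzRing_gt1 F.
have cover : [set v : 'cV[F]_k | m *m v != 0] \subset
    [set v in Uset | m *m v != 0] :|: [set v in Uplanes | m *m v != 0].
  by apply/subsetP => v; rewrite !inE => ->; rewrite !andbT orNb.
have := leq_trans (subset_leq_card cover) (leq_card_setU _ _).
rewrite card_mulmx_neq0 rank_rV m0 subn1 /= expnS.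
have := card_Uset_form_neq0 m; have := card_Uplanes_form_neq0 m.
move: #|[set v in Uset | _]| #|[set v in Uplanes | _]| (q ^ k'.+4.+3)%N q_gt1 => A B X.
move: q => Q; rewrite !expnS expn0 muln1; nia.
Qed.

Lemma C2_dist_le_len : (q ^ k.-1 - 2 * q ^ 2 <= n)%N.
Proof.
have one_neq0 : const_mx 1 != 0 :> 'rV[F]_k.
  by apply/eqP => /matrixP/(_ 0 0)/eqP; rewrite !mxE oner_eq0.
exact: leq_trans (C2_wt_lb one_neq0) (wt_le _).
Qed.

Lemma C2_mindist : (q ^ k.-1 - 2 * q ^ 2 <= code_mindist G)%N.
Proof.
apply: leq_code_mindist C2_dist_le_len _ => m mG0; apply: C2_wt_lb.
by apply: contraNneq mG0 => ->; rewrite mul0mx.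
Qed.

Lemma C2_dist_ge8 : (8 <= q ^ k.-1 - 2 * q ^ 2)%N.
Proof.
have q_gt1 := card_finNzRing_gt1 F.
have : (q ^ 4 <= q ^ k.-1)%N by rewrite leq_pexp2l // ltnW.
move: q_gt1 (q ^ k.-1)%N; move: q => Q Q_gt1 X; rewrite !expnS expn0 muln1; nia.
Qed.

Lemma rank_C2 : \rank G = k.
Proof.
apply/eqP/row_free_mul_neq0 => m m0; have := leq_trans C2_dist_ge8 (C2_wt_lb m0).
by apply: contraTneq => ->; rewrite wt0.
Qed.

Lemma C2_cm_bound_q_ge3 : (3 <= q)%N -> (cm_bound F n (code_mindist G) 2 <= k.+1)%N.
Proof.
move=> q3; have dist8 := C2_dist_ge8; have len := C2_length; rewrite expnS in len.
have n3 : (1 * 3 <= n)%N by have := C2_dist_le_len; lia.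
apply: leq_trans (@cm_bound_le F n (code_mindist G) 2 1 isT n3) _.
suff : (kopt F (n - 1 * 3) (code_mindist G) < k)%N by lia.
apply: kopt_lt; rewrite expnS; apply: plotkin_gap_q_ge3 len C2_mindist => //.
by rewrite -subn_gt0 (leq_trans _ dist8).
Qed.

Lemma C2_cm_bound_q2 : q = 2%N -> (cm_bound F n (code_mindist G) 2 <= k.+2)%N.
Proof.
move=> q2; have dist8 := C2_dist_ge8; have len := C2_length; rewrite expnS in len.
have n6 : (2 * 3 <= n)%N by have := C2_dist_le_len; lia.
apply: leq_trans (@cm_bound_le F n (code_mindist G) 2 2 isT n6) _.
suff : (kopt F (n - 2 * 3) (code_mindist G) < k.-1)%N by lia.
apply: kopt_lt; rewrite q2 in len dist8 *; apply: plotkin_gap_q2 len _ => //.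
  by rewrite -subn_gt0 (leq_trans _ dist8).
by move: C2_mindist; rewrite q2.
Qed.

End CodeC2.

Theorem theorem4p2 (F : finFieldType) (k n : nat) (G : 'M[F]_(k, n)) :
  (8 <= k)%N ->
  C2_generator G ->
  (#|F| = 2%N -> (cm_defect F n (\rank G) (code_mindist G) 2 <= 2)%N) /\
  ((3 <= #|F|)%N -> (cm_defect F n (\rank G) (code_mindist G) 2 <= 1)%N).
Proof.
move=> k_ge8; have [k' Ek] : exists k', k = k'.+4.+4 by exists (k - 8)%N; lia.
subst k.
move=> HG; rewrite /cm_defect rank_C2 //; split.
  by move/(C2_cm_bound_q2 HG); lia.
by move/(C2_cm_bound_q_ge3 HG); lia.
Qed.
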